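(* Let $(D, c, \mathcal{B})$ be an instance of 2-Layer General Transshipment with parts $U, W$ (so $A(D) \subseteq U \times W$) and integral capacities $c: A(D) \to \mathbb{N}$. Suppose that for each $v \in V(D)$, either $B_v \subseteq \mathbb{Z}$ or $B_v = [c_v, d_v]$ for some integers $c_v \le d_v$. If $(D, c, \mathcal{B})$ has a $\mathcal{B}$-transshipment, then it has a maximum-value $\mathcal{B}$-transshipment that is integral, i.e., assigns an integer value to every arc.
   Context: A digraph $D$ is 2-layered with parts $U,W$ if $V(D)$ is the disjoint union of $U$ and $W$ and $A(D) \subseteq U \times W$. An instance of 2-Layer General Transshipment consists of a 2-layered digraph $D$ with parts $U,W$, capacities $c: A(D) \to \mathbb{Q}_{\ge 0}$, and sets $\mathcal{B} = \{B_v : v \in V(D)\}$ with $B_v \subseteq \mathbb{Q}_{\ge 0}$ for $v \in U$ and $B_v \subseteq \mathbb{Q}_{\le 0}$ for $v \in W$. For $f: A(D) \to \mathbb{Q}_{\ge 0}$ the excess at $v$ is $f_\Sigma(v) = \sum_{(v,x)\in A(D)} f(v,x) - \sum_{(x,v)\in A(D)} f(x,v)$. A $\mathcal{B}$-transshipment is an $f: A(D) \to \mathbb{Q}_{\ge 0}$ with $f(a) \le c(a)$ for every arc $a$ and $f_\Sigma(v) \in B_v$ for all $v$; its value is $\mathrm{val}(f) = \sum_{u \in U} f_\Sigma(u)$. *)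

From mathcomp Require Import all_boot all_order all_algebra.
Set Implicit Arguments. Unset Strict Implicit. Unset Printing Implicit Defensive.
Import Order.TTheory GRing.Theory Num.Theory.
Local Open Scope ring_scope.

(* A 2-layered digraph with parts U, W : arc set A ⊆ U × W.
   Flows f : U * W -> rat; only values on arcs of A are meaningful. *)

Definition is_int (x : rat) : Prop := exists z : int, x = z%:~R.

Definition excessU (U W : finType) (A : {set U * W}) (f : U * W -> rat) (u : U) : rat :=
  \sum_(w : W | (u, w) \in A) f (u, w).

Definition excessW (U W : finType) (A : {set U * W}) (f : U * W -> rat) (w : W) : rat :=
  - \sum_(u : U | (u, w) \in A) f (u, w).

Definition is_transshipment (U W : finType) (A : {set U * W}) (c : U * W -> nat)
    (BU : U -> rat -> Prop) (BW : W -> rat -> Prop) (f : U * W -> rat) : Prop :=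
  (forall a, a \in A -> 0 <= f a /\ f a <= (c a)%:R) /\
  (forall u, BU u (excessU A f u)) /\
  (forall w, BW w (excessW A f w)).

Definition tvalue (U W : finType) (A : {set U * W}) (f : U * W -> rat) : rat :=
  \sum_(u : U) excessU A f u.

Definition int_or_int_interval (B : rat -> Prop) : Prop :=
  (forall x, B x -> is_int x) \/
  (exists cv dv : int, cv <= dv /\ forall x, B x <-> (cv%:~R <= x /\ x <= dv%:~R)).

(* Iterative rounding.  Let F be the fractional arcs of a transshipment g.
   An integral sum cannot have exactly one fractional term, so every vertex
   of integral excess meets either none or at least two arcs of F.  Counting
   degrees in the bipartite graph F, such vertices impose fewer linear
   conditions than F has arcs (when every vertex met by F is of this kind,
   one condition is redundant, because the arc sums on the two sides agree),
   so some nonzero weighting d of F sums to zero at each of them.  Moving g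
   along +d or -d, whichever does not lower the value, until a fractional
   arc value or excess becomes integral keeps every arc value and excess in
   its integral hull [floor, ceil]; since capacities are integral and each
   B_v is integral or an integral interval, the result is still feasible and
   has fewer fractional quantities.  So every transshipment is dominated by
   an integral one, and an integral one of largest value, which is a natural
   number bounded by the total capacity, is a maximum transshipment. *)

From mathcomp Require Import all_boot all_order all_algebra.
From mathcomp Require Import lra zify.
From Stdlib Require Import Classical.
Set Implicit Arguments. Unset Strict Implicit. Unset Printing Implicit Defensive.
Import Order.TTheory GRing.Theory Num.Theory.
Local Open Scope ring_scope.

Section IntHull.
Variable R : archiRealFieldType.

Definition in_int_hull (x y : R) : bool :=
  (Num.floor x)%:~R <= y <= (Num.ceil x)%:~R.

Lemma nonint_floor_lt (x : R) : x \isn't a Num.int -> (Num.floor x)%:~R < x.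
Proof.
move=> xNint; rewrite lt_neqAle floor_le andbT.
by apply: contraNN xNint => /eqP <-; rewrite rpred_int.
Qed.

Lemma nonint_lt_ceil (x : R) : x \isn't a Num.int -> x < (Num.ceil x)%:~R.
Proof.
move=> xNint; rewrite lt_neqAle ceil_ge andbT.
by apply: contraNN xNint => /eqP ->; rewrite rpred_int.
Qed.

Lemma int_interval_int_hull (m n : int) (x y : R) :
  m%:~R <= x <= n%:~R -> in_int_hull x y -> m%:~R <= y <= n%:~R.
Proof.
case/andP=> mx xn /andP[fy yc]; apply/andP; split.
- by apply: le_trans fy; rewrite ler_int floor_ge_int.
- by apply: le_trans yc _; rewrite ler_int ceil_le_int.
Qed.

Lemma int_in_int_hull (x y : R) : x \is a Num.int -> in_int_hull x y -> y = x.
Proof.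
move=> xint; rewrite /in_int_hull ceil_floor xint addr0 -{3}(floorK xint).
by move=> /andP[fy yf]; apply/le_anti; rewrite yf.
Qed.

Lemma rounding_step (O : finType) (x e : O -> R) o0 :
  e o0 != 0 -> (forall o, e o != 0 -> x o \isn't a Num.int) ->
  exists2 t : R, 0 < t &
    (forall o, in_int_hull (x o) (x o + t * e o)) /\
    exists2 o, e o != 0 & x o + t * e o \is a Num.int.
Proof.
move=> eo0 xNint.
pose bound o : R := (if 0 < e o then Num.ceil (x o) else Num.floor (x o))%:~R.
(* [r o] is the time at which coordinate [o] reaches the end of its integral
   hull; the step stops at the first of these times. *)
pose r o := (bound o - x o) / e o.
have r_gt0 o : e o != 0 -> 0 < r o.
  move=> eo; have fx := nonint_floor_lt (xNint o eo).
  have xc := nonint_lt_ceil (xNint o eo).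
  rewrite /r /bound; case: (ltrP 0 (e o)) => [e_gt0|e_le0].
    by rewrite divr_gt0 // subr_gt0.
  by rewrite ltr_ndivlMr ?mul0r ?subr_lt0 // lt_neqAle eo e_le0.
case: (@arg_minP _ _ _ o0 (fun o => e o != 0) r eo0) => os eos r_min.
exists (r os); first exact: r_gt0.
split; last by exists os; rewrite // divfK // addrC subrK rpred_int.
move=> o; have fx := floor_le (x o); have xc := ceil_ge (x o).
have [->|eo] := eqVneq (e o) 0; first by rewrite mulr0 addr0 /in_int_hull fx xc.
have := r_min o eo; have := r_gt0 os eos; rewrite /r /bound.
set t := _ / e os; case: (ltrP 0 (e o)) => [e_gt0|e_le0] t_gt0.
  rewrite ler_pdivlMr // => te.
  have : 0 <= t * e o by rewrite mulr_ge0 // ltW.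
  by rewrite /in_int_hull; lra.
have e_lt0 : e o < 0 by rewrite lt_neqAle eo e_le0.
rewrite ler_ndivlMr // => te.
have : t * e o <= 0 by rewrite mulr_ge0_le0 // ltW.
by rewrite /in_int_hull; lra.
Qed.

End IntHull.

Lemma int_or_int_interval_int_hull (B : rat -> Prop) x y :
  int_or_int_interval B -> B x -> in_int_hull x y -> B y.
Proof.
case=> [B_int|[m [n [_ BE]]]] Bx xy.
- by rewrite (int_in_int_hull _ xy) //; apply/intrP; exact: B_int Bx.
- by apply/BE/andP/(int_interval_int_hull _ xy)/andP/BE.
Qed.

Lemma exists_nontrivial_solution (K : fieldType) (I J : finType)
    (P : pred I) (Q : pred J) (M : I -> J -> K) :
  (#|Q| < #|P|)%N ->
  exists2 d : I -> K, (forall i, ~~ P i -> d i = 0) &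
    (exists i, d i != 0) /\ forall j, Q j -> \sum_i d i * M i j = 0.
Proof.
move=> QltP.
pose Mx : 'M[K]_(#|P|, #|Q|) := \matrix_(k, l) M (enum_val k) (enum_val l).
have : kermx Mx != 0.
  rewrite -mxrank_eq0 mxrank_ker subn_eq0 -ltnNge.
  exact: leq_ltn_trans (rank_leq_col Mx) QltP.
case/rowV0Pn => v /sub_kermxP vMx v_neq0.
pose d i := \sum_(k | enum_val k == i) v 0 k.
have dE k : d (enum_val k) = v 0 k.
  by rewrite /d (big_pred1 k) // => k'; apply/eqP/eqP => [/enum_val_inj|->].
exists d.
  move=> i Pi; apply: big_pred0 => k; apply: contraNF Pi => /eqP <-.
  exact: enum_valP.
split.
  have [k vk|v0] := pickP (fun k => v 0 k != 0).
    by exists (enum_val k); rewrite dE.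
  case/eqP: v_neq0; apply/rowP => k; by rewrite mxE; apply/eqP/negbFE/v0.
move=> j Qj; have Qj' : j \in Q by [].
have := congr1 (fun B : 'rV_#|Q| => B 0 (enum_rank_in Qj' j)) vMx.
rewrite !mxE => vMx_j; apply: etrans vMx_j; rewrite /d.
under eq_bigr do rewrite mulr_suml.
rewrite (exchange_big_dep xpredT) //=; apply: eq_bigr => k _.
by rewrite (big_pred1 (enum_val k)) ?mxE ?enum_rankK_in.
Qed.

Lemma int_sum_other_nonint (R : archiNumDomainType) (I : finType) (P : pred I)
    (x : I -> R) i :
  \sum_(j | P j) x j \is a Num.int -> P i -> x i \isn't a Num.int ->
  exists j, [&& j != i, P j & x j \isn't a Num.int].
Proof.
move=> sum_int Pi xi_nonint.
have [j|others_int] := pickP (fun j => [&& j != i, P j & x j \isn't a Num.int]).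
  by exists j.
have rest_int : \sum_(j | P j && (j != i)) x j \is a Num.int.
  apply: rpred_sum => j /andP[Pj ji].
  by move: (others_int j); rewrite ji Pj /= => /negbFE.
case/negP: xi_nonint; move: sum_int; rewrite (bigD1 i) //=.
by move=> /rpredB/(_ rest_int); rewrite addrK.
Qed.

Lemma exists_max_nat (P : nat -> Prop) (N : nat) :
  P 0%N -> (forall n, P n -> (n <= N)%N) ->
  exists2 n, P n & forall m, P m -> (m <= n)%N.
Proof.
elim: N => [|N IH] P0 P_le; first by exists 0%N => // m /P_le.
have [PN1|PN1] := classic (P N.+1); first by exists N.+1.
apply: IH => // m Pm; have := P_le m Pm; rewrite leq_eqVlt => /predU1P[mN1|//].
by rewrite mN1 in Pm.
Qed.

Section BipartiteWeighting.
Variables (K : fieldType) (U W : finType).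
Implicit Types (F : {set U * W}) (f : U * W -> K) (v : U + W).

Definition incident v (a : U * W) : bool :=
  match v with inl u => a.1 == u | inr w => a.2 == w end.

Definition arcsum F f v : K := \sum_(a in F | incident v a) f a.

Definition degree F v : nat := #|[set a in F | incident v a]|.

Lemma sum_arcsum_inl F f : \sum_u arcsum F f (inl u) = \sum_(a in F) f a.
Proof. by rewrite (partition_big fst xpredT). Qed.

Lemma sum_arcsum_inr F f : \sum_w arcsum F f (inr w) = \sum_(a in F) f a.
Proof. by rewrite (partition_big snd xpredT). Qed.

Lemma sum_degree F : (\sum_v degree F v = #|F| + #|F|)%N.
Proof.
have parts (X : finType) (p : U * W -> X) :
    (\sum_x #|[set a in F | p a == x]| = #|F|)%N.
  rewrite -sum1_card (partition_big p xpredT) //; apply: eq_bigr => x _.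
  by rewrite -sum1_card; apply: eq_bigl => a; rewrite inE.
by rewrite big_sumType (parts _ fst) (parts _ snd).
Qed.

Lemma arcsum_degree0 F f v : degree F v = 0%N -> arcsum F f v = 0.
Proof.
move=> /eqP; rewrite cards_eq0 => /eqP Fv0; apply: big_pred0 => a.
by have := congr1 (fun S : {set U * W} => a \in S) Fv0; rewrite !inE => ->.
Qed.

Lemma arcsum_incidence F f v : (forall a, a \notin F -> f a = 0) ->
  arcsum F f v = \sum_a f a * (incident v a)%:R.
Proof.
move=> f_supp; rewrite /arcsum big_mkcond; apply: eq_bigr => a _.
have [aF|/f_supp->] := boolP (a \in F);
  by case: (incident v a); rewrite ?mulr0 ?mulr1.
Qed.

(* An arc has one end on each side, so the arcsums on the two sides agree. *)
Lemma arcsum_eq0_all_but_one F f v1 :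
  (forall v, v != v1 -> arcsum F f v = 0) -> arcsum F f v1 = 0.
Proof.
move=> others0; have := sum_arcsum_inl F f; rewrite -sum_arcsum_inr.
case: v1 others0 => [u1|w1] others0.
- rewrite (bigD1 u1) //= big1 ?addr0 => [->|u uu1]; last exact: others0.
  by rewrite big1 // => w _; apply: others0.
- rewrite [RHS](bigD1 w1) //= [in RHS]big1 ?addr0 => [<-|w ww1].
    by rewrite big1 // => u _; apply: others0.
  exact: others0.
Qed.

Lemma exists_balanced_weighting F (P : pred (U + W)) :
  F != set0 -> (forall v, P v -> degree F v != 1%N) ->
  exists2 d : U * W -> K, (forall a, a \notin F -> d a = 0) &
    (exists a, d a != 0) /\ forall v, P v -> arcsum F d v = 0.
Proof.
move=> /set0Pn[[u0 w0] a0F] P_deg.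
pose touched v := (0 < degree F v)%N.
(* The condition at v1 can be dropped: either P v1 fails, or P holds at every
   touched vertex and the condition at v1 follows from the others. *)
have [v1 v1_touched v1_free] : exists2 v1, touched v1 &
    (P v1 -> forall v, touched v -> P v).
  have [/existsP[v /andP[tv Pv]]|all_P] := boolP [exists v, touched v && ~~ P v].
    by exists v => // Pv'; rewrite Pv' in Pv.
  exists (inl u0) => [|_ v tv].
    by apply/card_gt0P; exists (u0, w0); rewrite inE a0F /=.
  by apply: contraNT all_P => Pv; apply/existsP; exists v; rewrite tv.
pose Q v := [&& touched v, P v & v != v1].
have QltF : (#|Q| < #|F|)%N.
  (* 2 #|Q| + 1 <= \sum_v degree F v = 2 #|F| *)
  have : (\sum_v ((if Q v then 2 else 0) + (if v == v1 then 1 else 0))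
           <= \sum_v degree F v)%N.
    apply: leq_sum => v _; rewrite /Q.
    have [->|_] := eqVneq v v1; rewrite ?andbF ?andbT; first exact: v1_touched.
    case: (boolP (touched v)) => //= tv; case Pv: (P v) => //.
    by have := P_deg v Pv; rewrite /touched in tv; lia.
  rewrite big_split /= -!big_mkcond sum_nat_const /= big_pred1_eq sum_degree.
  by rewrite /= cardE; lia.
have [d d_supp [d_nz d_bal]] :=
  exists_nontrivial_solution (fun a v => (incident v a)%:R : K) QltF.
have QE v : v != v1 -> P v -> arcsum F d v = 0.
  move=> vv1 Pv; have [tv|] := boolP (touched v).
    by rewrite arcsum_incidence // d_bal // /Q tv Pv.
  by rewrite -eqn0Ngt => /eqP; apply: arcsum_degree0.
exists d => //; split=> // v Pv.
have [v_v1|vv1] := eqVneq v v1; last exact: QE.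
rewrite v_v1 in Pv *.
apply: arcsum_eq0_all_but_one => v' v'v1.
have [tv'|] := boolP (touched v'); first exact: QE v' v'v1 (v1_free Pv v' tv').
by rewrite -eqn0Ngt => /eqP; apply: arcsum_degree0.
Qed.

End BipartiteWeighting.

Lemma degree_nonint_neq1 (R : archiNumFieldType) (U W : finType)
    (A : {set U * W}) (g : U * W -> R) v :
  arcsum A g v \is a Num.int ->
  degree [set a in A | g a \isn't a Num.int] v != 1%N.
Proof.
move=> sum_int; apply/cards1P => -[a0 Fv].
have : a0 \in [set a in [set a in A | g a \isn't a Num.int] | incident v a].
  by rewrite Fv set11.
rewrite !inE => /andP[/andP[a0A ga0] va0].
have [a1 /and3P[a1a0 /andP[a1A va1] ga1]] := int_sum_other_nonint sum_int
  (introT andP (conj a0A va0)) ga0.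
have : a1 \in [set a0] by rewrite -Fv !inE a1A ga1 va1.
by rewrite inE (negbTE a1a0).
Qed.



Section Transshipment.
Variables (U W : finType) (A : {set U * W}).
Implicit Types (f g d : U * W -> rat) (v : U + W).

Definition excess f v : rat :=
  match v with inl u => excessU A f u | inr w => excessW A f w end.

Definition coord f (o : (U * W) + (U + W)) : rat :=
  match o with inl a => f a | inr v => excess f v end.

Definition nonint_count f : nat := #|[set o | coord f o \isn't a Num.int]|.

Lemma excess_arcsum f v :
  excess f v = if v is inl _ then arcsum A f v else - arcsum A f v.
Proof.
case: v => [u|w] /=; rewrite /excessU /excessW /arcsum; last congr (- _).
- rewrite [RHS](reindex_onto (fun w => (u, w)) snd)
    => [|[x y] /andP[_ /eqP /= ->]] //.
  by apply: eq_bigl => w; rewrite /= !eqxx !andbT.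
- rewrite [RHS](reindex_onto (fun u => (u, w)) fst)
    => [|[x y] /andP[_ /eqP /= ->]] //.
  by apply: eq_bigl => u; rewrite /= !eqxx !andbT.
Qed.

Lemma excessD f d v : excess (fun a => f a + d a) v = excess f v + excess d v.
Proof. by case: v => [u|w]; rewrite /= /excessU /excessW big_split ?opprD. Qed.

Lemma excessZ t d v : excess (fun a => t * d a) v = t * excess d v.
Proof. by case: v => [u|w]; rewrite /= /excessU /excessW ?mulrN mulr_sumr. Qed.

Lemma coordD f d o : coord (fun a => f a + d a) o = coord f o + coord d o.
Proof. by case: o => [a|v] //=; apply: excessD. Qed.

Lemma coordZ t d o : coord (fun a => t * d a) o = t * coord d o.
Proof. by case: o => [a|v] //=; apply: excessZ. Qed.

Lemma tvalueE f : tvalue A f = \sum_(a in A) f a.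
Proof.
rewrite -sum_arcsum_inl; apply: eq_bigr => u _.
exact: (excess_arcsum f (inl u)).
Qed.

Lemma tvalueD f d : tvalue A (fun a => f a + d a) = tvalue A f + tvalue A d.
Proof. by rewrite !tvalueE big_split. Qed.

Lemma tvalueZ t d : tvalue A (fun a => t * d a) = t * tvalue A d.
Proof. by rewrite !tvalueE mulr_sumr. Qed.

Lemma excess_int f v : (excess f v \is a Num.int) = (arcsum A f v \is a Num.int).
Proof. by rewrite excess_arcsum; case: v => // w; rewrite rpredN. Qed.

Lemma excess_eq0 f v : (excess f v == 0) = (arcsum A f v == 0).
Proof. by rewrite excess_arcsum; case: v => // w; rewrite oppr_eq0. Qed.

Lemma exists_fractional_direction g a0 :
  a0 \in A -> g a0 \isn't a Num.int ->
  exists d, [/\ exists a, d a != 0,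
    forall o, coord d o != 0 -> coord g o \isn't a Num.int & 0 <= tvalue A d].
Proof.
move=> a0A ga0; pose F := [set a in A | g a \isn't a Num.int].
have F_neq0 : F != set0 by apply/set0Pn; exists a0; rewrite inE a0A.
have [d d_supp [[a1 da1] d_bal]] := exists_balanced_weighting rat F_neq0
  (@degree_nonint_neq1 _ _ _ A g).
have d_suppA a : a \notin A -> d a = 0.
  by move=> aA; apply: d_supp; rewrite inE negb_and aA.
have d_frac o : coord d o != 0 -> coord g o \isn't a Num.int.
  case: o => [a|v] /=.
    by apply: contraR => ga; apply/eqP/d_supp; rewrite inE negb_and ga orbT.
  rewrite excess_eq0 excess_int (arcsum_incidence _ d_suppA).
  by rewrite -(arcsum_incidence _ d_supp); apply: contraNN => /d_bal ->.
pose s : rat := if 0 <= tvalue A d then 1 else -1.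
have s_neq0 : s != 0 by rewrite /s; case: ifP.
exists (fun a => s * d a); split.
- by exists a1; rewrite mulf_neq0.
- by move=> o; rewrite coordZ mulf_eq0 negb_or => /andP[_ /d_frac].
- rewrite tvalueZ /s; case: ifP => [|/negbT]; first by rewrite mul1r.
  by rewrite -ltNge mulN1r oppr_ge0 => /ltW.
Qed.

End Transshipment.

Section IntegralRounding.
Variables (U W : finType) (A : {set U * W}) (c : U * W -> nat).
Variables (BU : U -> rat -> Prop) (BW : W -> rat -> Prop).
Hypothesis hintU : forall u, int_or_int_interval (BU u).
Hypothesis hintW : forall w, int_or_int_interval (BW w).

Lemma improving_rounding_step g a0 :
  is_transshipment A c BU BW g -> a0 \in A -> g a0 \isn't a Num.int ->
  exists2 g', is_transshipment A c BU BW g' &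
    (nonint_count A g' < nonint_count A g)%N /\ tvalue A g <= tvalue A g'.
Proof.
move=> [g_cap [g_U g_W]] a0A ga0.
have [d [[a1 da1] d_frac d_val]] := exists_fractional_direction a0A ga0.
have [t t_gt0 [hull [o1 do1 g'o1]]] := rounding_step (o0 := inl a1) da1 d_frac.
pose g' a := g a + t * d a.
have coord_g' o : coord A g' o = coord A g o + t * coord A d o.
  by rewrite coordD coordZ.
exists g'; first split.
- move=> a aA; apply/andP.
  apply: (@int_interval_int_hull _ 0 (c a) (g a)) (hull (inl a)).
  by apply/andP; apply: g_cap.
- split=> [u|w].
  + rewrite -[excessU _ _ _]/(coord A g' (inr (inl u))) coord_g'.
    exact: int_or_int_interval_int_hull (hintU u) (g_U u) (hull (inr (inl u))).
  + rewrite -[excessW _ _ _]/(coord A g' (inr (inr w))) coord_g'.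
    exact: int_or_int_interval_int_hull (hintW w) (g_W w) (hull (inr (inr w))).
split; last by rewrite tvalueD tvalueZ lerDl mulr_ge0 // ltW.
apply: proper_card; rewrite properE; apply/andP; split.
  apply/subsetP => o; rewrite !inE coord_g'.
  by have [->|/d_frac //] := eqVneq (coord A d o) 0; rewrite mulr0 addr0.
by apply/subsetPn; exists o1; rewrite !inE ?coord_g' ?g'o1 ?d_frac.
Qed.

Lemma exists_integral_improvement g :
  is_transshipment A c BU BW g ->
  exists2 h, is_transshipment A c BU BW h &
    (forall a, a \in A -> h a \is a Num.int) /\ tvalue A g <= tvalue A h.
Proof.
have [n] := ubnP (nonint_count A g); elim: n g => // n IH g count_lt g_ok.
have [a /andP[aA ga]|g_int] := pickP (fun a => (a \in A) && (g a \isn't a Num.int)).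
  have [g' g'_ok [count_dec val_le]] := improving_rounding_step g_ok aA ga.
  have [h h_ok [h_int val_le']] := IH g' (leq_trans count_dec count_lt) g'_ok.
  by exists h => //; split => //; apply: le_trans val_le'.
exists g => //; split => // a aA.
by move: (g_int a); rewrite aA => /negbFE.
Qed.

Lemma tvalue_le_capacity f :
  is_transshipment A c BU BW f -> tvalue A f <= (\sum_(a in A) c a)%N%:R.
Proof.
by move=> [f_cap _]; rewrite tvalueE natr_sum ler_sum // => a /f_cap[].
Qed.

Lemma tvalue_ge0 f : is_transshipment A c BU BW f -> 0 <= tvalue A f.
Proof. by move=> [f_cap _]; rewrite tvalueE sumr_ge0 // => a /f_cap[]. Qed.

Lemma integral_tvalue_nat f : is_transshipment A c BU BW f ->
  (forall a, a \in A -> f a \is a Num.int) -> tvalue A f \is a Num.nat.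
Proof.
by move=> f_ok f_int; rewrite -intrEge0 ?tvalue_ge0 // tvalueE rpred_sum.
Qed.

End IntegralRounding.

Theorem lemma7 (U W : finType) (A : {set U * W}) (c : U * W -> nat)
    (BU : U -> rat -> Prop) (BW : W -> rat -> Prop)
    (hBU : forall u x, BU u x -> 0 <= x)
    (hBW : forall w x, BW w x -> x <= 0)
    (hintU : forall u, int_or_int_interval (BU u))
    (hintW : forall w, int_or_int_interval (BW w))
    (hex : exists f, is_transshipment A c BU BW f) :
  exists f, is_transshipment A c BU BW f /\
    (forall a, a \in A -> is_int (f a)) /\
    (forall g, is_transshipment A c BU BW g -> tvalue A g <= tvalue A f).
Proof.
pose integral_value n := exists2 h, is_transshipment A c BU BW h &
  (forall a, a \in A -> h a \is a Num.int) /\ n%:R <= tvalue A h.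
have [n [h h_ok [h_int n_le]] n_max] :
    exists2 n, integral_value n & forall m, integral_value m -> (m <= n)%N.
  apply: (exists_max_nat (N := (\sum_(a in A) c a)%N)).
    have [f0 /(exists_integral_improvement hintU hintW)] := hex.
    move=> [h0 h0_ok [h0_int _]].
    by exists h0 => //; split => //; apply: tvalue_ge0 h0_ok.
  move=> m [h h_ok [_ m_le]]; rewrite -(ler_nat rat).
  exact: le_trans m_le (tvalue_le_capacity h_ok).
exists h; split=> //; split=> [a aA|g g_ok]; first exact/intrP/h_int.
have [h' h'_ok [h'_int g_le]] := exists_integral_improvement hintU hintW g_ok.
have /natrP[m h'_m] := integral_tvalue_nat h'_ok h'_int.
apply: (le_trans g_le); rewrite h'_m (le_trans _ n_le) // ler_nat; apply: n_max.
by exists h' => //; split=> //; rewrite h'_m.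
Qed.
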